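(* Let $k\in\mathbb{N}$ and $B\in\mathsf{PSD}_d^k$. Then the matrix $M_{k-1}(B)$ is positive semidefinite.
   Context: For $v\in\mathbb{C}^d$, $\sigma(v)$ is the number of nonzero coordinates. $\mathsf{PSD}_d^k$ is the set of matrices $\sum_{n\in I}|v_n\rangle\langle v_n|$ for finite families $v_n\in\mathbb{C}^d$ with $\sigma(v_n)\le k$. For $B\in\mathcal{M}_d(\mathbb{C})$ and $m\ge 0$, $M_m(B)$ is the matrix with $M_m(B)_{ii}=m|B_{ii}|$ and $M_m(B)_{ij}=-|B_{ij}|$ for $i\ne j$. *)

From HB Require Import structures.
From mathcomp Require Import all_boot all_order all_algebra.
Set Implicit Arguments. Unset Strict Implicit. Unset Printing Implicit Defensive.
Import Order.TTheory GRing.Theory Num.Theory.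
Local Open Scope ring_scope.

(* Scalars: C : numClosedFieldType (the complex numbers are an instance;
   conjugation is Num.conj). *)

Definition adjmx (C : numClosedFieldType) m n (A : 'M[C]_(m, n)) : 'M[C]_(n, m) :=
  (map_mx Num.conj A)^T.

Definition sigma (C : numClosedFieldType) d (v : 'cV[C]_d) : nat :=
  #|[set i : 'I_d | v i 0 != 0]|.

Definition ketbra (C : numClosedFieldType) d (v : 'cV[C]_d) : 'M[C]_d :=
  v *m adjmx v.

Definition PSDk (C : numClosedFieldType) (d k : nat) (B : 'M[C]_d) : Prop :=
  exists (N : nat) (v : 'I_N -> 'cV[C]_d),
    (forall n, (sigma (v n) <= k)%N) /\ B = \sum_(n < N) ketbra (v n).

Definition Mm (C : numClosedFieldType) d (m : C) (B : 'M[C]_d) : 'M[C]_d :=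
  \matrix_(i, j) (if i == j then m * `|B i i| else - `|B i j|).

Definition psd (C : numClosedFieldType) d (A : 'M[C]_d) : Prop :=
  adjmx A = A /\ forall x : 'cV[C]_d, 0 <= (adjmx x *m A *m x) 0 0.

From mathcomp Require Import all_boot all_order all_algebra ring.
Set Implicit Arguments. Unset Strict Implicit. Unset Printing Implicit Defensive.
Import Order.TTheory GRing.Theory Num.Theory.
Local Open Scope ring_scope.

(* The quadratic form of M_{k-1}(B) at x is k sum_i |B_ii| |x_i|^2 minus the
   (real) Hermitian form of the entrywise modulus |B| at x, which is at most its
   value at |x|.  For B = sum_n v_n v_n^* we have |B_ij| <= sum_n |v_ni| |v_nj|
   and |B_ii| = sum_n |v_ni|^2, so that value is at most
   sum_n (sum_i |v_ni| |x_i|)^2, and Cauchy-Schwarz on the support of v_n,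
   of size at most k, bounds each square by k sum_i |v_ni|^2 |x_i|^2. *)

Lemma sqr_sum_le_card (R : numDomainType) (I : finType) (S : {pred I}) (a : I -> R) :
  {in S, forall i, a i \is Num.real} ->
  (\sum_(i in S) a i) ^+ 2 <= #|S|%:R * \sum_(i in S) a i ^+ 2.
Proof.
move=> Ra; rewrite -(ler_pMn2r (isT : (0 < 2)%N)).
have amgm i j : i \in S -> j \in S -> a i * a j *+ 2 <= a i ^+ 2 + a j ^+ 2.
  by move=> Si Sj; apply: real_leif_mean_square_scaled; apply: Ra.
rewrite expr2 mulr_suml -sumrMnl.
apply: le_trans (_ : \sum_(i in S) \sum_(j in S) (a i ^+ 2 + a j ^+ 2) <= _).
  apply: ler_sum => i Si; rewrite mulr_sumr -sumrMnl.
  by apply: ler_sum => j Sj; apply: amgm.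
under eq_bigr => i _ do rewrite big_split /= sumr_const.
by rewrite big_split /= sumr_const sumrMnl mulr2n mulr_natl.
Qed.

Lemma hermitian_form_real (C : numClosedFieldType) (I : finType) (A : I -> I -> C)
    (x : I -> C) :
  (forall i j, A j i = (A i j)^*) ->
  \sum_i \sum_j (x i)^* * A i j * x j \is Num.real.
Proof.
move=> herA; rewrite CrealE rmorph_sum exchange_big /=; apply/eqP.
apply: eq_bigr => j _; rewrite rmorph_sum; apply: eq_bigr => i _.
by rewrite !rmorphM /= conjCK -herA mulrC [x j * _]mulrC mulrA.
Qed.

Lemma quad_formE (C : numClosedFieldType) d (A : 'M[C]_d) (x : 'cV[C]_d) :
  (adjmx x *m A *m x) 0 0 = \sum_i \sum_j (x i 0)^* * A i j * x j 0.
Proof.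
rewrite mxE exchange_big /=; apply: eq_bigr => i _.
by rewrite mxE big_distrl /=; apply: eq_bigr => j _; rewrite /adjmx !mxE.
Qed.

Section MmForm.
Variables (C : numClosedFieldType) (d : nat) (m : C) (B : 'M[C]_d).

Lemma Mm_formE (x : 'cV[C]_d) :
  (adjmx x *m Mm m B *m x) 0 0 =
  (m + 1) * \sum_i `|B i i| * `|x i 0| ^+ 2
  - \sum_i \sum_j (x i 0)^* * `|B i j| * x j 0.
Proof.
rewrite quad_formE mulr_sumr -sumrB; apply: eq_bigr => i _.
rewrite (bigD1 i) //= [in RHS](bigD1 i) //= mxE eqxx normCKC.
rewrite (eq_bigr (fun j => - ((x i 0)^* * `|B i j| * x j 0))); last first.
  by move=> j /negbTE ji; rewrite mxE eq_sym ji; ring.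
rewrite sumrN; ring.
Qed.

Hypotheses (m_real : m \is Num.real) (normB_sym : forall i j, `|B i j| = `|B j i|).

Lemma Mm_adj : adjmx (Mm m B) = Mm m B.
Proof.
apply/matrixP => i j; rewrite /adjmx !mxE eq_sym.
case: eqP => [->|_]; first by rewrite conj_Creal // rpredM ?normr_real.
by rewrite rmorphN /= conj_Creal ?normr_real // normB_sym.
Qed.

Lemma psd_Mm :
  (forall y : 'I_d -> C, (forall i, 0 <= y i) ->
     \sum_i \sum_j y i * `|B i j| * y j <= (m + 1) * \sum_i `|B i i| * y i ^+ 2) ->
  psd (Mm m B).
Proof.
move=> abs_form_le; split; first exact: Mm_adj.
move=> x; rewrite Mm_formE subr_ge0.
set O := \sum_i \sum_j _.
have O_real : O \is Num.real.
  by apply: hermitian_form_real => i j; rewrite conj_Creal ?normr_real.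
apply: le_trans (real_ler_norm O_real) _.
apply: le_trans (abs_form_le (fun i => `|x i 0|) _); last by move=> i.
apply: le_trans (ler_norm_sum _ _ _) _; apply: ler_sum => i _.
apply: le_trans (ler_norm_sum _ _ _) _; apply: ler_sum => j _.
by rewrite !normrM norm_conjC normr_id.
Qed.

End MmForm.

Lemma sqr_sum_norm_le_sigma (C : numClosedFieldType) d (v : 'cV[C]_d) (y : 'I_d -> C) :
  (forall i, y i \is Num.real) ->
  (\sum_i `|v i 0| * y i) ^+ 2 <= (sigma v)%:R * \sum_i (`|v i 0| * y i) ^+ 2.
Proof.
move=> y_real; set S := [set i | v i 0 != 0].
have on_support (F : 'I_d -> C) :
    (forall i, v i 0 = 0 -> F i = 0) -> \sum_i F i = \sum_(i in S) F i.
  move=> F0; rewrite (bigID (mem S)) /= [X in _ + X]big1 ?addr0 // => i.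
  by rewrite inE negbK => /eqP /F0.
rewrite !on_support => [|i ->|i ->]; rewrite ?normr0 ?mul0r ?expr0n //.
by apply: sqr_sum_le_card => i _; rewrite rpredM ?normr_real.
Qed.

Section KetbraSum.
Variables (C : numClosedFieldType) (d N : nat) (v : 'I_N -> 'cV[C]_d).
Let B := \sum_(n < N) ketbra (v n).

Lemma ketbra_sumE i j : B i j = \sum_(n < N) v n i 0 * (v n j 0)^*.
Proof.
rewrite summxE; apply: eq_bigr => n _.
by rewrite /ketbra /adjmx !mxE big_ord1 !mxE.
Qed.

Lemma ketbra_sum_normC i j : `|B i j| = `|B j i|.
Proof.
rewrite !ketbra_sumE -norm_conjC rmorph_sum; congr `|_|; apply: eq_bigr => n _.
by rewrite rmorphM /= conjCK mulrC.
Qed.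

Lemma ketbra_sum_diag_norm i : `|B i i| = \sum_(n < N) `|v n i 0| ^+ 2.
Proof.
under [RHS]eq_bigr => n _ do rewrite normCK.
by rewrite ketbra_sumE ger0_norm // sumr_ge0 // => n _; rewrite -normCK exprn_ge0.
Qed.

Lemma ketbra_sum_norm_le i j : `|B i j| <= \sum_(n < N) `|v n i 0| * `|v n j 0|.
Proof.
rewrite ketbra_sumE; apply: le_trans (ler_norm_sum _ _ _) _.
by apply: ler_sum => n _; rewrite normrM norm_conjC.
Qed.

Lemma ketbra_sum_abs_form_le (k : nat) (y : 'I_d -> C) :
  (forall n, sigma (v n) <= k)%N -> (forall i, 0 <= y i) ->
  \sum_i \sum_j y i * `|B i j| * y j <= k%:R * \sum_i `|B i i| * y i ^+ 2.
Proof.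
move=> sigma_le y_ge0; set a := fun n i => `|v n i 0| * y i.
have expand_sqr : \sum_i \sum_j y i * (\sum_(n < N) `|v n i 0| * `|v n j 0|) * y j
    = \sum_(n < N) (\sum_i a n i) ^+ 2.
  under [RHS]eq_bigr => n _ do rewrite expr2 mulr_suml.
  rewrite [RHS]exchange_big /=; apply: eq_bigr => i _.
  under [RHS]eq_bigr => n _ do rewrite mulr_sumr.
  rewrite [RHS]exchange_big /=; apply: eq_bigr => j _.
  by rewrite mulr_sumr mulr_suml; apply: eq_bigr => n _; rewrite /a; ring.
have diagE : \sum_i `|B i i| * y i ^+ 2 = \sum_(n < N) \sum_i a n i ^+ 2.
  rewrite exchange_big /=; apply: eq_bigr => i _.
  by rewrite ketbra_sum_diag_norm mulr_suml; apply: eq_bigr => n _; rewrite exprMn.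
have entrywise_le :
    \sum_i \sum_j y i * `|B i j| * y j
    <= \sum_i \sum_j y i * (\sum_(n < N) `|v n i 0| * `|v n j 0|) * y j.
  apply: ler_sum => i _; apply: ler_sum => j _.
  by rewrite ler_wpM2r ?ler_wpM2l ?ketbra_sum_norm_le.
apply: le_trans entrywise_le _.
rewrite expand_sqr diagE mulr_sumr; apply: ler_sum => n _.
have y_real i : y i \is Num.real by rewrite ger0_real.
apply: le_trans (sqr_sum_norm_le_sigma (v n) y_real) _.
by rewrite ler_wpM2r ?ler_nat // sumr_ge0 // => i _; rewrite exprn_ge0 ?mulr_ge0.
Qed.

End KetbraSum.

Theorem proposition3p11 (C : numClosedFieldType) (d k : nat) (B : 'M[C]_d) :
  PSDk k B -> psd (Mm (k%:R - 1) B).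
Proof.
move=> [N [v [sigma_le ->]]]; apply: psd_Mm.
- by rewrite rpredB ?realn ?real1.
- exact: ketbra_sum_normC.
- by move=> y y_ge0; rewrite subrK; apply: ketbra_sum_abs_form_le.
Qed.
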